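(* Let $m\ge 1$ and let $u,v,p,q\in\mathbb{R}[x,y,z,w]$ be homogeneous polynomials, all of degree $m$, such that $yp=zv$ and $yq=wv$. Define $F:\mathbb{R}^4\to\mathbb{R}^4$ by $F(x,y,z,w)=(u,v,p,q)$. Then at every point of $\mathbb{R}^4$ with $y\neq 0$, $$|J(F)| = \frac{m\,v^2\,(v\,u_x-u\,v_x)}{y^3},$$ where $|J(F)|$ is the determinant of the Jacobian matrix of $F$ and subscripts denote partial derivatives.
   Context: For $F=(F_1,F_2,F_3,F_4):\mathbb{R}^4\to\mathbb{R}^4$ in the variables $(x_1,x_2,x_3,x_4)=(x,y,z,w)$, $J(F)$ denotes the $4\times 4$ matrix $[\partial F_i/\partial x_j]$ and $|J(F)|$ its determinant. *)

(* Polynomials in 4 variables (x,y,z,w) = (X0,X1,X2,X3)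
   over a real field R, represented as finite lists of monomials. *)
From HB Require Import structures.
From mathcomp Require Import all_boot all_order all_algebra.
Set Implicit Arguments. Unset Strict Implicit. Unset Printing Implicit Defensive.
Import Order.TTheory GRing.Theory Num.Theory.
Local Open Scope ring_scope.

Definition mpoly (R : Type) := seq (R * ('I_4 -> nat)).

Section MPoly.
Variable R : realFieldType.

Definition meval (p : mpoly R) (a : 'I_4 -> R) : R :=
  \sum_(t <- p) t.1 * \prod_(i < 4) a i ^+ t.2 i.

Definition mderiv (j : 'I_4) (p : mpoly R) : mpoly R :=
  [seq (t.1 * (t.2 j)%:R, fun i => if i == j then (t.2 i).-1 else t.2 i) | t <- p].

Definition mhomog (m : nat) (p : mpoly R) : bool :=
  all (fun t => (\sum_(i < 4) t.2 i)%N == m) p.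

Definition jac (F : 'I_4 -> mpoly R) (a : 'I_4 -> R) : 'M[R]_4 :=
  \matrix_(i < 4, j < 4) meval (mderiv j (F i)) a.

Definition map4 (f0 f1 f2 f3 : mpoly R) : 'I_4 -> mpoly R :=
  fun i => nth f0 [:: f0; f1; f2; f3] i.
End MPoly.

Definition X0 : 'I_4 := @Ordinal 4 0 isT.
Definition X1 : 'I_4 := @Ordinal 4 1 isT.
Definition X2 : 'I_4 := @Ordinal 4 2 isT.
Definition X3 : 'I_4 := @Ordinal 4 3 isT.

From HB Require Import structures.
From mathcomp Require Import all_boot all_order all_algebra.
From mathcomp Require Import ring.
Import Order.TTheory GRing.Theory Num.Theory.
Local Open Scope ring_scope.
Set Implicit Arguments.
Unset Strict Implicit. Unset Printing Implicit Defensive.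

(* Differentiating y p = z v and y q = w v gives y ∇p = z ∇v + v e_z - p e_y
   and y ∇q = w ∇v + v e_w - q e_y, so for y ≠ 0 the last two rows of J(F) are
   determined by ∇v; Euler's identity Σ x_j ∂_j f = m f for u and v also
   determines u_y and v_y.  Substituting all this into the expansion of the
   4 × 4 determinant leaves a rational identity.  The identities between
   polynomials are only given pointwise, so they are differentiated along the
   coordinate lines, where they become identities of univariate polynomials. *)

Lemma big_ord4 (V : nmodType) (F : 'I_4 -> V) :
  \sum_(i < 4) F i = F X0 + F X1 + F X2 + F X3.
Proof.
rewrite !big_ord_recl big_ord0 addr0 !addrA.
by congr (_ + _ + _ + _); congr F; apply: val_inj.
Qed.

Lemma det_mx44 (R : comRingType) (A : 'M[R]_4) :
  \det A =
    A X0 X0 * A X1 X1 * A X2 X2 * A X3 X3 - A X0 X0 * A X1 X1 * A X2 X3 * A X3 X2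
  - A X0 X0 * A X1 X2 * A X2 X1 * A X3 X3 + A X0 X0 * A X1 X2 * A X2 X3 * A X3 X1
  + A X0 X0 * A X1 X3 * A X2 X1 * A X3 X2 - A X0 X0 * A X1 X3 * A X2 X2 * A X3 X1
  - A X0 X1 * A X1 X0 * A X2 X2 * A X3 X3 + A X0 X1 * A X1 X0 * A X2 X3 * A X3 X2
  + A X0 X1 * A X1 X2 * A X2 X0 * A X3 X3 - A X0 X1 * A X1 X2 * A X2 X3 * A X3 X0
  - A X0 X1 * A X1 X3 * A X2 X0 * A X3 X2 + A X0 X1 * A X1 X3 * A X2 X2 * A X3 X0
  + A X0 X2 * A X1 X0 * A X2 X1 * A X3 X3 - A X0 X2 * A X1 X0 * A X2 X3 * A X3 X1
  - A X0 X2 * A X1 X1 * A X2 X0 * A X3 X3 + A X0 X2 * A X1 X1 * A X2 X3 * A X3 X0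
  + A X0 X2 * A X1 X3 * A X2 X0 * A X3 X1 - A X0 X2 * A X1 X3 * A X2 X1 * A X3 X0
  - A X0 X3 * A X1 X0 * A X2 X1 * A X3 X2 + A X0 X3 * A X1 X0 * A X2 X2 * A X3 X1
  + A X0 X3 * A X1 X1 * A X2 X0 * A X3 X2 - A X0 X3 * A X1 X1 * A X2 X2 * A X3 X0
  - A X0 X3 * A X1 X2 * A X2 X0 * A X3 X1 + A X0 X3 * A X1 X2 * A X2 X1 * A X3 X0.
Proof.
have -> : A = \matrix_(i < 4, j < 4) A (inord i) (inord j).
  by apply/matrixP => i j; rewrite mxE !inord_val.
rewrite (expand_det_row _ 0) !big_ord_recl big_ord0 /cofactor.
rewrite !(expand_det_row _ 0) !big_ord_recl !big_ord0 /cofactor.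
rewrite !(expand_det_row _ 0) !big_ord_recl !big_ord0 /cofactor.
rewrite !det_mx11 !mxE /= /bump /=.
have I0 : inord 0 = X0 by apply: val_inj; rewrite /= inordK.
have I1 : inord 1 = X1 by apply: val_inj; rewrite /= inordK.
have I2 : inord 2 = X2 by apply: val_inj; rewrite /= inordK.
have I3 : inord 3 = X3 by apply: val_inj; rewrite /= inordK.
rewrite I0 I1 I2 I3; ring.
Qed.

Section JacobianAlgebra.
Variables (F : fieldType) (J : 'M[F]_4) (a : 'I_4 -> F) (M U V P Q : F).
Hypotheses (eulerU : \sum_(j < 4) a j * J X0 j = M * U)
           (eulerV : \sum_(j < 4) a j * J X1 j = M * V).
Hypotheses
  (gradP : forall j, (X1 == j)%:R * P + a X1 * J X2 j = (X2 == j)%:R * V + a X2 * J X1 j)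
  (gradQ : forall j, (X1 == j)%:R * Q + a X1 * J X3 j = (X3 == j)%:R * V + a X3 * J X1 j).
Hypotheses (syzP : a X1 * P = a X2 * V) (syzQ : a X1 * Q = a X3 * V)
           (ya : a X1 != 0).

Lemma det_jacobian_syzygy :
  \det J = M * V ^+ 2 * (V * J X0 X0 - U * J X1 X0) / a X1 ^+ 3.
Proof.
have solve (t s : F) : a X1 * t = s -> t = s / a X1 by move=> <-; field.
have row2E j : J X2 j = ((X2 == j)%:R * V + a X2 * J X1 j - (X1 == j)%:R * P) / a X1.
  by apply: solve; rewrite -(gradP j); ring.
have row3E j : J X3 j = ((X3 == j)%:R * V + a X3 * J X1 j - (X1 == j)%:R * Q) / a X1.
  by apply: solve; rewrite -(gradQ j); ring.
have J01E : J X0 X1 = (M * U - a X0 * J X0 X0 - a X2 * J X0 X2 - a X3 * J X0 X3) / a X1.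
  by apply: solve; rewrite -eulerU big_ord4; ring.
have J11E : J X1 X1 = (M * V - a X0 * J X1 X0 - a X2 * J X1 X2 - a X3 * J X1 X3) / a X1.
  by apply: solve; rewrite -eulerV big_ord4; ring.
rewrite det_mx44 !row2E !row3E J01E J11E (solve _ _ syzP) (solve _ _ syzQ) /=.
by field.
Qed.
End JacobianAlgebra.

Lemma poly_eq0_horner (R : numDomainType) (D : {poly R}) :
  (forall s, D.[s] = 0) -> D = 0.
Proof.
move=> D0; apply: (@roots_geq_poly_eq0 _ D [seq i%:R | i <- iota 0 (size D)]).
- by apply/allP => _ /mapP[i _ ->]; apply/rootP/D0.
- by rewrite map_inj_uniq ?iota_uniq // => i j /eqP; rewrite eqr_nat => /eqP.
- by rewrite size_map size_iota.
Qed.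

Section MPolyCalculus.
Variable R : realFieldType.
Implicit Types (a : 'I_4 -> R) (P Q : mpoly R).

Lemma meval_bigD1 j P a : meval P a =
  \sum_(t <- P) t.1 * (a j ^+ t.2 j * \prod_(i < 4 | i != j) a i ^+ t.2 i).
Proof. by apply: eq_bigr => t _; rewrite (bigD1 j). Qed.

Lemma meval_mderiv j P a : meval (mderiv j P) a =
  \sum_(t <- P) t.1 * (t.2 j)%:R *
    (a j ^+ (t.2 j).-1 * \prod_(i < 4 | i != j) a i ^+ t.2 i).
Proof.
rewrite /meval /mderiv big_map; apply: eq_bigr => t _ /=.
rewrite (bigD1 j) //= eqxx; congr (_ * (_ * _)).
by apply: eq_bigr => i /negbTE ->.
Qed.

Lemma euler_mhomog m P a : mhomog m P ->
  \sum_(j < 4) a j * meval (mderiv j P) a = m%:R * meval P a.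
Proof.
under eq_bigr => j _ do rewrite meval_mderiv big_distrr.
rewrite exchange_big /= /meval big_distrr /=.
elim: P => [|t P IH]; first by rewrite !big_nil.
rewrite /= => /andP[/eqP deg_t /IH {}IH]; rewrite !big_cons IH; congr (_ + _).
transitivity (\sum_(j < 4) (t.2 j)%:R * (t.1 * \prod_(i < 4) a i ^+ t.2 i)).
  apply: eq_bigr => j _; rewrite [in RHS](bigD1 j) //=.
  case: (t.2 j) => [|n] /=; first by rewrite !mulr0n !(mulr0, mul0r).
  rewrite exprS; ring.
by rewrite -mulr_suml -natr_sum deg_t.
Qed.

Definition mline P a j : {poly R} :=
  \sum_(t <- P) (t.1 * \prod_(i < 4 | i != j) a i ^+ t.2 i) *: ((a j)%:P + 'X) ^+ t.2 j.

Definition shift a j s : 'I_4 -> R := fun i => if i == j then a i + s else a i.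

Lemma horner_mline P a j s : (mline P a j).[s] = meval P (shift a j s).
Proof.
rewrite (meval_bigD1 j) /mline horner_sum; apply: eq_bigr => t _.
rewrite hornerZ horner_exp hornerD hornerC hornerX /shift eqxx.
under [X in _ = _ * (_ * X)]eq_bigr => i /negbTE-> do []; ring.
Qed.

Lemma mline_at0 P a j : (mline P a j).[0] = meval P a.
Proof.
rewrite (meval_bigD1 j) /mline horner_sum; apply: eq_bigr => t _.
by rewrite hornerZ horner_exp hornerD hornerC hornerX addr0; ring.
Qed.

Lemma deriv_mline_at0 P a j : (mline P a j)^`().[0] = meval (mderiv j P) a.
Proof.
rewrite meval_mderiv /mline raddf_sum horner_sum; apply: eq_bigr => t _.
rewrite /= derivZ deriv_exp derivD derivC derivX add0r mul1r.
rewrite hornerZ hornerMn horner_exp hornerD hornerC hornerX addr0.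
by rewrite mulrnAr -mulr_natr; ring.
Qed.

Lemma mderiv_var_mul_eq k l P Q a j :
  (forall b, b k * meval P b = b l * meval Q b) ->
  (k == j)%:R * meval P a + a k * meval (mderiv j P) a =
  (l == j)%:R * meval Q a + a l * meval (mderiv j Q) a.
Proof.
move=> PQ; pose Y i : {poly R} := (a i)%:P + (i == j)%:R *: 'X.
have horner_Y i s : (Y i).[s] = shift a j s i.
  rewrite /Y /shift hornerD hornerZ hornerC hornerX.
  by case: (i == j); rewrite ?mul1r ?mul0r ?addr0.
have D0 : Y k * mline P a j - Y l * mline Q a j = 0.
  apply: poly_eq0_horner => s.
  by rewrite hornerD hornerN !hornerM !horner_mline !horner_Y PQ subrr.
move/(congr1 (fun D => D^`().[0]))/eqP: D0.
rewrite derivB !derivM deriv0 horner0 hornerD hornerN !hornerD !hornerM.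
rewrite !deriv_mline_at0 !mline_at0 /Y !derivD !derivC !derivZ derivX !add0r.
rewrite !hornerD !hornerZ !hornerC !hornerX !mulr0 !addr0 !mulr1.
by rewrite subr_eq0 => /eqP.
Qed.

End MPolyCalculus.

Theorem lemma3p1 (R : realFieldType) (m : nat) (u v p q : mpoly R) :
  (1 <= m)%N ->
  mhomog m u -> mhomog m v -> mhomog m p -> mhomog m q ->
  (forall a : 'I_4 -> R, a X1 * meval p a = a X2 * meval v a) ->
  (forall a : 'I_4 -> R, a X1 * meval q a = a X3 * meval v a) ->
  forall a : 'I_4 -> R, a X1 != 0 ->
    \det (jac (map4 u v p q) a) =
    m%:R * (meval v a) ^+ 2
      * (meval v a * meval (mderiv X0 u) a - meval u a * meval (mderiv X0 v) a)
      / (a X1) ^+ 3.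
Proof.
move=> _ hu hv _ _ yp_zv yq_wv a ya.
have jacE i j : jac (map4 u v p q) a i j = meval (mderiv j (map4 u v p q i)) a.
  by rewrite mxE.
rewrite (@det_jacobian_syzygy _ _ a m%:R (meval u a) (meval v a) (meval p a) (meval q a))
        ?jacE //=.
- by under eq_bigr do rewrite jacE; apply: euler_mhomog.
- by under eq_bigr do rewrite jacE; apply: euler_mhomog.
- by move=> j; rewrite !jacE; apply: mderiv_var_mul_eq.
- by move=> j; rewrite !jacE; apply: mderiv_var_mul_eq.
Qed.
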